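(* Let $\mathcal{G}$ be a Grothendieck category, $X\in\mathcal{G}$, $\sigma$ an ordinal, $(X_\alpha\mid\alpha\le\sigma)$ a chain of subobjects of $X$ with $X_0=0$, $X_\sigma=X$, $X_\mu=\bigcup_{\alpha<\mu}X_\alpha$ for limit $\mu\le\sigma$, and let $(A_\alpha\mid\alpha<\sigma)$ be subobjects of $X$ with $X_{\alpha+1}=X_\alpha+A_\alpha$ for all $\alpha<\sigma$. Let $\mathcal{L}$ be the set of closed subsets of $\sigma$. If $(S_i\mid i\in I)$ is any family of elements of $\mathcal{L}$, then $\bigcup_{i\in I}S_i\in\mathcal{L}$ and $\bigcap_{i\in I}S_i\in\mathcal{L}$. Moreover, the restriction $\ell:\mathcal{L}\to\mathrm{Subobj}(X)$ is a complete lattice homomorphism, i.e. $\ell(\bigcup_i S_i)=\sum_i\ell(S_i)$ and $\ell(\bigcap_iS_i)=\bigcap_i\ell(S_i)$.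
   Context: For $S\subseteq\sigma$ (with $\sigma$ identified with the set of ordinals $<\sigma$), $\ell(S)=\sum_{\alpha\in S}A_\alpha\in\mathrm{Subobj}(X)$. A subset $S\subseteq\sigma$ is called closed if every $\alpha\in S$ satisfies $X_\alpha\cap A_\alpha\subseteq\sum_{\gamma\in S,\,\gamma<\alpha}A_\gamma$. Sums, intersections and direct unions are taken in the lattice $\mathrm{Subobj}(X)$ of subobjects of $X$. *)

(* Subobj(X) of an object X of a Grothendieck category is modelled by its
   defining lattice-theoretic structure: a complete, modular, upper
   continuous (AB5) lattice. *)
From Stdlib Require Import Classical.

Definition jn {T : Type} (sup : (T -> Prop) -> T) (a b : T) : T :=
  sup (fun x => x = a \/ x = b).

Definition mt {T : Type} (le : T -> T -> Prop) (sup : (T -> Prop) -> T)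
  (a b : T) : T := sup (fun x => le x a /\ le x b).

Definition inf {T : Type} (le : T -> T -> Prop) (sup : (T -> Prop) -> T)
  (P : T -> Prop) : T := sup (fun x => forall y, P y -> le x y).

Definition is_lub {T : Type} (le : T -> T -> Prop) (P : T -> Prop) (x : T) :=
  (forall y, P y -> le y x) /\ (forall z, (forall y, P y -> le y z) -> le x z).

Definition directed {T : Type} (le : T -> T -> Prop) (D : T -> Prop) :=
  (exists d, D d) /\
  (forall d1 d2, D d1 -> D d2 -> exists d, D d /\ le d1 d /\ le d2 d).

Record UCModLattice := {
  car :> Type;
  le : car -> car -> Prop;
  sup : (car -> Prop) -> car;
  le_refl : forall a, le a a;
  le_trans : forall a b c, le a b -> le b c -> le a c;
  le_antisym : forall a b, le a b -> le b a -> a = b;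
  sup_lub : forall P, is_lub le P (sup P);
  modular : forall a b c, le a c -> jn sup a (mt le sup b c) = mt le sup (jn sup a b) c;
  upper_continuous : forall a D, directed le D ->
    mt le sup a (sup D) = sup (fun x => exists d, D d /\ x = mt le sup a d)
}.

Arguments le {_}.
Arguments sup {_}.

Definition Ljoin {L : UCModLattice} (a b : L) : L := jn sup a b.
Definition Lmeet {L : UCModLattice} (a b : L) : L := mt le sup a b.
Definition Linf {L : UCModLattice} (P : L -> Prop) : L := inf le sup P.
Definition Lbot {L : UCModLattice} : L := sup (fun _ => False).
Definition Ltop {L : UCModLattice} : L := sup (fun _ => True).

Definition ell {L : UCModLattice} {O : Type} (A : O -> L) (S : O -> Prop) : L :=
  sup (fun x => exists a, S a /\ x = A a).

(* S is a closed subset of sigma (ordinals are the elements of O below sigma):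
   S ⊆ sigma and  X_a ∩ A_a ⊆ sum_{g in S, g < a} A_g  for all a in S. *)
Definition closed_set {L : UCModLattice} {O : Type} (lt : O -> O -> Prop)
  (sigma : O) (X A : O -> L) (S : O -> Prop) : Prop :=
  (forall a, S a -> lt a sigma) /\
  (forall a, S a -> le (Lmeet (X a) (A a)) (ell A (fun g => S g /\ lt g a))).

(* Write S_<b for the elements of S below b.  For a closed S and a < b one has
   X_a ∩ ℓ(S_<b) ⊆ ℓ(S_<a), by transfinite induction on b: at a successor
   b = b'+1 modularity gives X_b' ∩ (ℓ(S_<b') + A_b') ⊆ ℓ(S_<b') + X_b' ∩ A_b',
   and closedness absorbs the last term; at a limit, ℓ(S_<b) is the directed
   union of the ℓ(S_<c), so upper continuity reduces to smaller c.  For an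
   intersection N, a second induction shows X_b ∩ ⋂_i ℓ(S_i,<b) ⊆ ℓ(N_<b);
   at b = σ (where X_σ = X) this is ℓ(⋂ S_i) ⊇ ⋂ ℓ(S_i), and at b = a ∈ N it is
   closedness of N. *)
From Stdlib Require Import Classical.

Section Lattice.
Context {L : UCModLattice}.
Implicit Types a b c x y z : L.

Lemma le_sup (P : L -> Prop) y : P y -> le y (sup P).
Proof. exact (proj1 (sup_lub L P) y). Qed.

Lemma sup_le (P : L -> Prop) z : (forall y, P y -> le y z) -> le (sup P) z.
Proof. exact (proj2 (sup_lub L P) z). Qed.

Lemma meet_le_l a b : le (Lmeet a b) a.
Proof. apply sup_le. intros y [H _]. exact H. Qed.

Lemma meet_le_r a b : le (Lmeet a b) b.
Proof. apply sup_le. intros y [_ H]. exact H. Qed.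

Lemma le_meet x a b : le x a -> le x b -> le x (Lmeet a b).
Proof. intros. apply le_sup. auto. Qed.

Lemma le_join_l a b : le a (Ljoin a b).
Proof. apply le_sup. auto. Qed.

Lemma le_join_r a b : le b (Ljoin a b).
Proof. apply le_sup. auto. Qed.

Lemma join_le a b z : le a z -> le b z -> le (Ljoin a b) z.
Proof. intros. apply sup_le. intros y [-> | ->]; auto. Qed.

Lemma inf_le (P : L -> Prop) y : P y -> le (Linf P) y.
Proof. intro. apply sup_le. auto. Qed.

Lemma le_inf (P : L -> Prop) x : (forall y, P y -> le x y) -> le x (Linf P).
Proof. intro. apply le_sup. auto. Qed.

Lemma bot_le x : le Lbot x.
Proof. apply sup_le. tauto. Qed.

Lemma le_top x : le x Ltop.
Proof. apply le_sup. auto. Qed.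

Lemma modular_le a b c : le a c -> le (Lmeet (Ljoin a b) c) (Ljoin a (Lmeet b c)).
Proof. intro H. unfold Lmeet, Ljoin. rewrite (modular L a b c H). apply le_refl. Qed.

Lemma le_of_meet_directed a (D : L -> Prop) z : directed le D -> le a (sup D) ->
  (forall d, D d -> le (Lmeet a d) z) -> le a z.
Proof.
  intros HD Ha Hz.
  apply le_trans with (Lmeet a (sup D)); [now apply le_meet; [apply le_refl|]|].
  unfold Lmeet. rewrite (upper_continuous L a D HD).
  apply sup_le. intros y [d [Hd ->]]. now apply Hz.
Qed.

Context {O : Type} (A : O -> L).

Lemma ell_mono (S T : O -> Prop) : (forall g, S g -> T g) -> le (ell A S) (ell A T).
Proof. intro H. apply sup_le. intros y [g [Hg ->]]. apply le_sup. eauto. Qed.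

Lemma ell_le (S : O -> Prop) z : (forall g, S g -> le (A g) z) -> le (ell A S) z.
Proof. intro H. apply sup_le. intros y [g [Hg ->]]. auto. Qed.

Lemma le_ell (S : O -> Prop) g : S g -> le (A g) (ell A S).
Proof. intro. apply le_sup. eauto. Qed.

Lemma ell_union {I : Type} (S : I -> O -> Prop) :
  ell A (fun g => exists i, S i g) = sup (fun x => exists i, x = ell A (S i)).
Proof.
  apply le_antisym.
  - apply ell_le. intros g [i Hg].
    apply le_trans with (ell A (S i)); [now apply le_ell|].
    apply le_sup. eauto.
  - apply sup_le. intros z [i ->]. apply ell_mono. eauto.
Qed.

End Lattice.

Lemma closed_set_union {L : UCModLattice} {O I : Type} (lt : O -> O -> Prop)
  (sigma : O) (X A : O -> L) (S : I -> O -> Prop) :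
  (forall i, closed_set lt sigma X A (S i)) ->
  closed_set lt sigma X A (fun a => exists i, S i a).
Proof.
  intros HS. split.
  - intros a [i Ha]. exact (proj1 (HS i) a Ha).
  - intros a [i Ha]. apply le_trans with (1 := proj2 (HS i) a Ha).
    apply ell_mono. intros g [Hg Hga]. eauto.
Qed.

Section Filtration.
Context {L : UCModLattice} {O : Type} (lt : O -> O -> Prop).
Hypothesis lt_irrefl : forall a, ~ lt a a.
Hypothesis lt_trans : forall a b c, lt a b -> lt b c -> lt a c.
Hypothesis lt_total : forall a b, lt a b \/ a = b \/ lt b a.
Hypothesis lt_wf : well_founded lt.
Variable sigma : O.
Hypothesis sigma_max : forall a, a = sigma \/ lt a sigma.
Variables X A : O -> L.
Hypothesis X_chain : forall a b, lt a b -> le (X a) (X b).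
Hypothesis X_zero : forall a0, (forall b, ~ lt b a0) -> X a0 = Lbot.
Hypothesis X_limit : forall mu, (exists a, lt a mu) ->
  (forall a, lt a mu -> exists b, lt a b /\ lt b mu) ->
  X mu = sup (fun x => exists a, lt a mu /\ x = X a).
Hypothesis X_succ : forall a b, lt a sigma -> lt a b ->
  (forall g, lt a g -> g = b \/ lt b g) -> X b = Ljoin (X a) (A a).

Definition succ_of (a b : O) : Prop := lt a b /\ forall g, lt a g -> g = b \/ lt b g.

Definition is_limit (b : O) : Prop :=
  (exists c, lt c b) /\ forall c, lt c b -> exists d, lt c d /\ lt d b.

Definition below (S : O -> Prop) (b : O) : O -> Prop := fun g => S g /\ lt g b.

Lemma lt_succ_of a b c : succ_of a b -> lt c b -> c = a \/ lt c a.
Proof.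
  intros [Hab Hsucc] Hcb. destruct (lt_total c a) as [H | [H | H]]; auto.
  destruct (Hsucc c H) as [-> | H']; exfalso; apply (lt_irrefl b); eauto.
Qed.

Lemma ordinal_cases b :
  (forall c, ~ lt c b) \/ (exists b', succ_of b' b) \/ is_limit b.
Proof.
  destruct (classic (exists c, lt c b)) as [Hne | Hempty]; [right | left; eauto].
  destruct (classic (forall c, lt c b -> exists d, lt c d /\ lt d b)) as [Hlim | Hnot];
    [right; now split|left].
  apply not_all_ex_not in Hnot as [b' Hb']. apply imply_to_and in Hb' as [Hb'b Hmax].
  exists b'. split; [exact Hb'b|]. intros g Hg.
  destruct (lt_total g b) as [H | [H | H]]; auto.
  exfalso. apply Hmax. eauto.
Qed.

Lemma exists_succ g s : lt g s -> exists m, succ_of g m.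
Proof.
  induction s as [s IH] using (well_founded_ind lt_wf). intro Hgs.
  destruct (classic (exists c, lt g c /\ lt c s)) as [[c [Hgc Hcs]] | Hnone].
  - exact (IH c Hcs Hgc).
  - exists s. split; [exact Hgs|]. intros c Hgc.
    destruct (lt_total c s) as [H | [H | H]]; auto.
    exfalso. eauto.
Qed.

Lemma lt_sigma a b : lt a b -> lt a sigma.
Proof. intro H. destruct (sigma_max b) as [-> | Hb]; eauto. Qed.

Lemma A_le_X g a : lt g a -> le (A g) (X a).
Proof.
  intro Hga. destruct (exists_succ g a Hga) as [m Hm].
  apply le_trans with (X m).
  - rewrite (X_succ g m (lt_sigma g a Hga) (proj1 Hm) (proj2 Hm)). apply le_join_r.
  - destruct (proj2 Hm a Hga) as [-> | H]; [apply le_refl | now apply X_chain].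
Qed.

Lemma ell_below_le_X S a : le (ell A (below S a)) (X a).
Proof. apply ell_le. intros g [_ Hga]. now apply A_le_X. Qed.

Lemma ell_below_mono S c d : lt c d \/ c = d -> le (ell A (below S c)) (ell A (below S d)).
Proof.
  intro Hcd. apply ell_mono. intros g [Hg Hgc]. split; [exact Hg|].
  destruct Hcd as [H | <-]; eauto.
Qed.

Lemma directed_image (F : O -> L) b : (exists c, lt c b) ->
  (forall c d, lt c d -> le (F c) (F d)) ->
  directed le (fun x => exists c, lt c b /\ x = F c).
Proof.
  intros [c Hc] HF. split; [eauto|].
  intros x1 x2 [c1 [H1 ->]] [c2 [H2 ->]].
  destruct (lt_total c1 c2) as [H | [<- | H]].
  - exists (F c2). repeat split; eauto using le_refl.
  - exists (F c1). repeat split; eauto using le_refl.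
  - exists (F c1). repeat split; eauto using le_refl.
Qed.

Lemma ell_below_limit S b : is_limit b ->
  le (ell A (below S b)) (sup (fun x => exists c, lt c b /\ x = ell A (below S c))).
Proof.
  intros [_ Hlim]. apply ell_le. intros g [Hg Hgb].
  destruct (Hlim g Hgb) as [d [Hgd Hdb]].
  apply le_trans with (ell A (below S d)); [now apply le_ell|].
  apply le_sup. eauto.
Qed.

Section ClosedSet.
Variable S : O -> Prop.
Hypothesis HS : closed_set lt sigma X A S.

Lemma closed_meet_ell_below_succ b' b : succ_of b' b ->
  le (Lmeet (X b') (ell A (below S b))) (ell A (below S b')).
Proof.
  intro Hsucc. destruct (classic (S b')) as [Sb' | nSb'].
  - set (e := ell A (below S b')).
    assert (Hb : le (ell A (below S b)) (Ljoin e (A b'))).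
    { apply ell_le. intros g [Hg Hgb].
      destruct (lt_succ_of b' b g Hsucc Hgb) as [-> | Hgb'].
      - apply le_join_r.
      - apply le_trans with e; [now apply le_ell | apply le_join_l]. }
    apply le_trans with (Lmeet (Ljoin e (A b')) (X b')).
    { apply le_meet; [apply le_trans with (1 := meet_le_r _ _); exact Hb | apply meet_le_l]. }
    apply le_trans with (1 := modular_le e (A b') (X b') (ell_below_le_X S b')).
    apply join_le; [apply le_refl|].
    apply le_trans with (2 := proj2 HS b' Sb').
    apply le_meet; [apply meet_le_r | apply meet_le_l].
  - apply le_trans with (1 := meet_le_r _ _). apply ell_mono.
    intros g [Hg Hgb]. split; [exact Hg|].
    destruct (lt_succ_of b' b g Hsucc Hgb) as [-> | H]; tauto.
Qed.

Lemma closed_meet_ell_below b a : lt a b ->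
  le (Lmeet (X a) (ell A (below S b))) (ell A (below S a)).
Proof.
  revert a. induction b as [b IH] using (well_founded_ind lt_wf). intros a Hab.
  destruct (ordinal_cases b) as [Hmin | [[b' Hb'] | Hlim]].
  - exfalso. exact (Hmin a Hab).
  - destruct (lt_succ_of b' b a Hb' Hab) as [-> | Hab'];
      [now apply closed_meet_ell_below_succ|].
    apply le_trans with (2 := IH b' (proj1 Hb') a Hab').
    apply le_meet; [apply meet_le_l|].
    apply le_trans with (2 := closed_meet_ell_below_succ b' b Hb').
    apply le_meet; [|apply meet_le_r].
    apply le_trans with (X a); [apply meet_le_l | now apply X_chain].
  - apply le_of_meet_directed with (D := fun x => exists c, lt c b /\ x = ell A (below S c)).
    + apply directed_image; [exact (proj1 Hlim)|]. intros c d Hcd. now apply ell_below_mono; left.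
    + apply le_trans with (1 := meet_le_r _ _). now apply ell_below_limit.
    + intros d [c [Hcb ->]]. destruct (lt_total a c) as [Hac | [<- | Hca]].
      * apply le_trans with (2 := IH c Hcb a Hac).
        apply le_meet; [|apply meet_le_r].
        apply le_trans with (1 := meet_le_l _ _). apply meet_le_l.
      * apply meet_le_r.
      * apply le_trans with (1 := meet_le_r _ _). now apply ell_below_mono; left.
Qed.

End ClosedSet.

Section ClosedFamily.
Variables (I : Type) (S : I -> O -> Prop).
Hypothesis HS : forall i, closed_set lt sigma X A (S i).

Definition X_meet_ell_below (b : O) : L :=
  Lmeet (X b) (Linf (fun x => exists i, x = ell A (below (S i) b))).

Lemma X_meet_ell_below_le i b : le (X_meet_ell_below b) (ell A (below (S i) b)).
Proof. apply le_trans with (1 := meet_le_r _ _). apply inf_le. eauto. Qed.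

Lemma X_meet_ell_below_lt c b : lt c b ->
  le (Lmeet (X c) (X_meet_ell_below b)) (X_meet_ell_below c).
Proof.
  intro Hcb. apply le_meet; [apply meet_le_l|]. apply le_inf. intros z [i ->].
  apply le_trans with (2 := closed_meet_ell_below (S i) (HS i) b c Hcb).
  apply le_meet; [apply meet_le_l|].
  apply le_trans with (1 := meet_le_r _ _). apply X_meet_ell_below_le.
Qed.

Lemma X_meet_ell_below_succ b' b : succ_of b' b ->
  le (X_meet_ell_below b') (ell A (below (fun g => forall i, S i g) b')) ->
  le (X_meet_ell_below b) (ell A (below (fun g => forall i, S i g) b)).
Proof.
  set (N := fun g => forall i, S i g). set (y := X_meet_ell_below b).
  intros Hb' IH.
  assert (Hstep : le (Lmeet (X b') y) (ell A (below N b))).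
  { apply le_trans with (1 := X_meet_ell_below_lt b' b (proj1 Hb')).
    apply le_trans with (1 := IH). now apply ell_below_mono; left; apply Hb'. }
  destruct (classic (N b')) as [Nb' | nNb'].
  - assert (HA : le (A b') y).
    { apply le_meet; [now apply A_le_X, Hb'|]. apply le_inf. intros z [i ->].
      apply le_ell. split; [apply Nb' | apply Hb']. }
    assert (HX : le y (Ljoin (A b') (X b'))).
    { apply le_trans with (1 := meet_le_l _ _).
      rewrite (X_succ b' b (lt_sigma b' b (proj1 Hb')) (proj1 Hb') (proj2 Hb')).
      apply join_le; [apply le_join_r | apply le_join_l]. }
    apply le_trans with (Lmeet (Ljoin (A b') (X b')) y); [now apply le_meet; [|apply le_refl]|].
    apply le_trans with (1 := modular_le (A b') (X b') y HA).
    apply join_le; [|exact Hstep]. apply le_ell. split; [exact Nb' | apply Hb'].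
  - (* some S_i misses b', so ℓ(S_i,<b) = ℓ(S_i,<b') ⊆ X_b' *)
    apply not_all_ex_not in nNb' as [i Hi].
    assert (HyX : le y (X b')).
    { apply le_trans with (1 := X_meet_ell_below_le i b).
      apply le_trans with (2 := ell_below_le_X (S i) b'). apply ell_mono.
      intros g [Hg Hgb]. split; [exact Hg|].
      destruct (lt_succ_of b' b g Hb' Hgb) as [-> | H]; tauto. }
    apply le_trans with (2 := Hstep). now apply le_meet; [|apply le_refl].
Qed.

Lemma X_meet_ell_below_le_inter b :
  le (X_meet_ell_below b) (ell A (below (fun g => forall i, S i g) b)).
Proof.
  induction b as [b IH] using (well_founded_ind lt_wf).
  destruct (ordinal_cases b) as [Hmin | [[b' Hb'] | Hlim]].
  - apply le_trans with (1 := meet_le_l _ _). rewrite (X_zero b Hmin). apply bot_le.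
  - exact (X_meet_ell_below_succ b' b Hb' (IH b' (proj1 Hb'))).
  - apply le_of_meet_directed with (D := fun x => exists c, lt c b /\ x = X c).
    + now apply directed_image; [apply Hlim|].
    + apply le_trans with (1 := meet_le_l _ _). rewrite (X_limit b (proj1 Hlim) (proj2 Hlim)).
      apply le_refl.
    + intros d [c [Hcb ->]].
      apply le_trans with (Lmeet (X c) (X_meet_ell_below b));
        [apply le_meet; [apply meet_le_r | apply meet_le_l]|].
      apply le_trans with (1 := X_meet_ell_below_lt c b Hcb).
      apply le_trans with (1 := IH c Hcb). now apply ell_below_mono; left.
Qed.

Lemma closed_set_inter : closed_set lt sigma X A (fun a => lt a sigma /\ forall i, S i a).
Proof.
  split; [now intros a [Ha _]|]. intros a [Ha Na].
  apply le_trans with (X_meet_ell_below a).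
  { apply le_meet; [apply meet_le_l|]. apply le_inf. intros z [i ->].
    exact (proj2 (HS i) a (Na i)). }
  apply le_trans with (1 := X_meet_ell_below_le_inter a). apply ell_mono.
  intros g [Hg Hga]. split; [split; [eauto | exact Hg] | exact Hga].
Qed.

Lemma ell_inter : X sigma = Ltop ->
  ell A (fun a => lt a sigma /\ forall i, S i a) = Linf (fun x => exists i, x = ell A (S i)).
Proof.
  intro X_top. apply le_antisym.
  - apply le_inf. intros z [i ->]. apply ell_mono. intros g [_ Hg]. apply Hg.
  - apply le_trans with (X_meet_ell_below sigma).
    { apply le_meet; [rewrite X_top; apply le_top|]. apply le_inf. intros z [i ->].
      apply le_trans with (1 := inf_le _ (ell A (S i)) (ex_intro _ i eq_refl)).
      apply ell_mono. intros g Hg. split; [exact Hg | exact (proj1 (HS i) g Hg)]. }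
    apply le_trans with (1 := X_meet_ell_below_le_inter sigma). apply ell_mono.
    intros g [Hg Hgs]. now split.
Qed.

End ClosedFamily.

End Filtration.

Theorem lemma2p5
  (L : UCModLattice)
  (* the ordinals <= sigma, as a well-ordered type with greatest element sigma *)
  (O : Type) (lt : O -> O -> Prop)
  (lt_irrefl : forall a, ~ lt a a)
  (lt_trans : forall a b c, lt a b -> lt b c -> lt a c)
  (lt_total : forall a b, lt a b \/ a = b \/ lt b a)
  (lt_wf : well_founded lt)
  (sigma : O) (sigma_max : forall a, a = sigma \/ lt a sigma)
  (X A : O -> L)
  (X_chain : forall a b, lt a b -> le (X a) (X b))
  (X_zero : forall a0, (forall b, ~ lt b a0) -> X a0 = Lbot)
  (X_top : X sigma = Ltop)
  (X_limit : forall mu, (exists a, lt a mu) ->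
     (forall a, lt a mu -> exists b, lt a b /\ lt b mu) ->
     X mu = sup (fun x => exists a, lt a mu /\ x = X a))
  (X_succ : forall a b, lt a sigma -> lt a b ->
     (forall g, lt a g -> g = b \/ lt b g) ->
     X b = Ljoin (X a) (A a))
  (I : Type) (S : I -> O -> Prop)
  (HS : forall i, closed_set lt sigma X A (S i)) :
  let U := fun a => exists i, S i a in
  let N := fun a => lt a sigma /\ forall i, S i a in
  closed_set lt sigma X A U /\
  closed_set lt sigma X A N /\
  ell A U = sup (fun x => exists i, x = ell A (S i)) /\
  ell A N = Linf (fun x => exists i, x = ell A (S i)).
Proof.
  intros U N. split; [|split; [|split]].
  - now apply closed_set_union.
  - now apply (closed_set_inter lt lt_irrefl lt_trans lt_total lt_wf sigma sigma_max X A).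
  - apply ell_union.
  - now apply (ell_inter lt lt_irrefl lt_trans lt_total lt_wf sigma sigma_max X A).
Qed.
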